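(* Let $q=2$. Under $G_2$ there are exactly $4$ plane orbits and $4$ point orbits, namely: planes: $\mathcal N_1=\{\Gamma\text{-planes}\}\cup\{\overline{1_{\mathscr C}}\text{-planes}\}$ of size $3+3=6$; $\mathcal N_2=\{2_{\mathscr C}\text{-planes}\}$ of size $6$; $\mathcal N_3=\{3_{\mathscr C}\text{-planes}\}$ of size $1$; $\mathcal N_4=\{0_{\mathscr C}\text{-planes}\}$ of size $2$; points: $\mathcal M_1=\{\mathscr C\text{-points}\}$ of size $3$; $\mathcal M_2=\{\text{T-points}\}\cup\{0_\Gamma\text{-points}\}$ of size $6+2=8$; $\mathcal M_3=\{3_\Gamma\text{-points}\}$ of size $1$; $\mathcal M_4=\{1_\Gamma\text{-points}\}$ of size $3$.
   Context: Notation. $\mathbb F_q$ is the field with $q$ elements, $\mathbb F_q^+=\mathbb F_q\cup\{\infty\}$. Points of $\mathrm{PG}(3,q)$ are written $\mathbf P(x_0,x_1,x_2,x_3)$ with $x$ a nonzero row vector up to scalars; $\boldsymbol\pi(c_0,c_1,c_2,c_3)$ is the plane $c_0x_0+c_1x_1+c_2x_2+c_3x_3=0$. Put $P(t)=\mathbf P(t^3,t^2,t,1)$ for $t\in\mathbb F_q$, $P(\infty)=\mathbf P(1,0,0,0)$, and $\mathscr C=\{P(t):t\in\mathbb F_q^+\}$ (the twisted cubic). The osculating planes are $\pi_{\rm osc}(t)=\boldsymbol\pi(1,-3t,3t^2,-t^3)$ ($t\in\mathbb F_q$) and $\pi_{\rm osc}(\infty)=\boldsymbol\pi(0,0,0,1)$;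 these $q+1$ planes are called $\Gamma$-planes. The tangent at $P(t)$, $t\in\mathbb F_q$, is the line through $P(t)$ and $\mathbf P(3t^2,2t,1,0)$; the tangent at $P(\infty)$ is the line through $\mathbf P(1,0,0,0)$ and $\mathbf P(0,1,0,0)$. $G_q$ is the group of all projectivities of $\mathrm{PG}(3,q)$ mapping $\mathscr C$ onto itself. Plane types: $\Gamma$-plane = osculating plane; $\overline{1_{\mathscr C}}$-plane = non-osculating plane meeting $\mathscr C$ in exactly one point; $d_{\mathscr C}$-plane ($d\in\{0,2,3\}$) = plane meeting $\mathscr C$ in exactly $d$ points. Point types (for $q\not\equiv0\pmod 3$): $\mathscr C$-point = point of $\mathscr C$; T-point = point off $\mathscr C$ on some tangent; for $\mu\in\{0,1,3\}$, $\mu_\Gamma$-point = point off $\mathscr C$, on no tangent, lying on exactly $\mu$ $\Gamma$-planes. *)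

(* Twisted cubic in PG(3,q); points and planes of PG(3,q)
   are represented by nonzero row vectors of 'rV[F]_4 (points: coordinates,
   planes: coefficient vectors c, plane c = { x | sum_i c_i x_i = 0 }).
   Projective equality is equality of row spaces, (u == v)%MS. *)
From HB Require Import structures.
From mathcomp Require Import all_boot all_order all_algebra.
Set Implicit Arguments. Unset Strict Implicit. Unset Printing Implicit Defensive.
Import Order.TTheory GRing.Theory Num.Theory.
Local Open Scope ring_scope.

Section TwistedCubic.
Variable F : finFieldType.

Definition row4 (a b c d : F) : 'rV[F]_4 := \row_(i < 4) nth 0 [:: a; b; c; d] i.

(* P(t), t in F_q^+ = option F (None = infinity) *)
Definition Pt (t : option F) : 'rV[F]_4 :=
  if t is Some s then row4 (s ^+ 3) (s ^+ 2) s 1 else row4 1 0 0 0.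

Definition osc (t : option F) : 'rV[F]_4 :=
  if t is Some s then row4 1 (- (3%:R * s)) (3%:R * s ^+ 2) (- s ^+ 3)
  else row4 0 0 0 1.

(* second point spanning the tangent line at P(t) *)
Definition tdir (t : option F) : 'rV[F]_4 :=
  if t is Some s then row4 (3%:R * s ^+ 2) (2%:R * s) 1 0 else row4 0 1 0 0.

Definition incident (x c : 'rV[F]_4) : bool := x *m c^T == 0.

Definition onC (x : 'rV[F]_4) : bool := [exists t, (x == Pt t)%MS].

Definition on_tangent (x : 'rV[F]_4) (t : option F) : bool :=
  (x <= col_mx (Pt t) (tdir t))%MS.

Definition nGamma (x : 'rV[F]_4) : nat := #|[set t | incident x (osc t)]|.

Definition Cpoint (x : 'rV[F]_4) : bool := onC x.
Definition Tpoint (x : 'rV[F]_4) : bool :=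
  ~~ onC x && [exists t, on_tangent x t].
Definition muGpoint (mu : nat) (x : 'rV[F]_4) : bool :=
  [&& ~~ onC x, ~~ [exists t, on_tangent x t] & nGamma x == mu].

Definition nC (c : 'rV[F]_4) : nat := #|[set t | incident (Pt t) c]|.

Definition Gplane (c : 'rV[F]_4) : bool := [exists t, (c == osc t)%MS].
Definition onebar_plane (c : 'rV[F]_4) : bool := ~~ Gplane c && (nC c == 1%N).
Definition dC_plane (d : nat) (c : 'rV[F]_4) : bool := nC c == d.

Definition inG (A : 'M[F]_4) : bool :=
  [&& A \in unitmx,
      [forall t, [exists t', (Pt t *m A == Pt t')%MS]] &
      [forall t', [exists t, (Pt t *m A == Pt t')%MS]]].

(* nonzero vectors; for F = F_2 these are exactly the points (planes) of PG(3,2) *)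
Definition nzvec : {set 'rV[F]_4} := [set x | x != 0].

(* orbits of G_q (as sets of representing vectors; faithful for q = 2) *)
Definition pt_orbit (x : 'rV[F]_4) : {set 'rV[F]_4} :=
  [set y | (y != 0) && [exists A, inG A && (x *m A == y)%MS]].
Definition pl_orbit (c : 'rV[F]_4) : {set 'rV[F]_4} :=
  [set c' | (c' != 0) &&
     [exists A, inG A && [forall x, incident x c == incident (x *m A) c']]].

Definition N1 : {set 'rV[F]_4} := [set c in nzvec | Gplane c || onebar_plane c].
Definition N2 : {set 'rV[F]_4} := [set c in nzvec | dC_plane 2 c].
Definition N3 : {set 'rV[F]_4} := [set c in nzvec | dC_plane 3 c].
Definition N4 : {set 'rV[F]_4} := [set c in nzvec | dC_plane 0 c].
Definition M1 : {set 'rV[F]_4} := [set x in nzvec | Cpoint x].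
Definition M2 : {set 'rV[F]_4} := [set x in nzvec | Tpoint x || muGpoint 0 x].
Definition M3 : {set 'rV[F]_4} := [set x in nzvec | muGpoint 3 x].
Definition M4 : {set 'rV[F]_4} := [set x in nzvec | muGpoint 1 x].

End TwistedCubic.

From HB Require Import structures.
From mathcomp Require Import all_boot all_order all_algebra.
Set Implicit Arguments. Unset Strict Implicit. Unset Printing Implicit Defensive.
Import GRing.Theory.
Local Open Scope ring_scope.

(* Over F_2 a projective point or plane is a nonzero vector of F_2^4, projective
   equality is plain equality, and G_2 consists of some of the 2^16 matrices of 'M_4, so
   every notion of the statement is a decidable property of explicitly
   enumerable objects.  Transporting everything along the bijections between
   'rV['F_2]_4 and boolean quadruples, and between 'M['F_2]_4 and quadruples of
   those, turns each notion into a computable predicate: G_2 is obtained by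
   filtering all matrices, and the orbit partitions and class sizes are then
   decided by evaluation. *)

Lemma F2_eq_natr (a : 'F_2) : a = (a != 0)%:R.
Proof. by case: a => [[|[|n]] ?] //; apply/val_inj. Qed.

Lemma F2_cases (a : 'F_2) : a = 0 \/ a = 1.
Proof. by rewrite (F2_eq_natr a); case: (a != 0); [right | left]. Qed.

Lemma F2_natrD (a b : bool) : (a%:R + b%:R : 'F_2) = (a (+) b)%:R.
Proof. by case: a; case: b => //; apply/val_inj. Qed.

Lemma F2_natrM (a b : bool) : (a%:R * b%:R : 'F_2) = (a && b)%:R.
Proof. by case: a; case: b => //; apply/val_inj. Qed.

Lemma F2_natr_eq0 (a : bool) : ((a%:R : 'F_2) == 0) = ~~ a.
Proof. by case: a. Qed.

Lemma eqmx_rV_F2 n (x y : 'rV['F_2]_n) : (x == y)%MS = (x == y).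
Proof.
apply/idP/eqP => [|->]; last by rewrite !submx_refl.
case/andP => /sub_rVP[a ->] /sub_rVP[b].
by case: (F2_cases a) => ->; rewrite ?scale1r // !scale0r scaler0 => ->.
Qed.

Lemma sub_col_mx_rV_F2 n (x a b : 'rV['F_2]_n) :
  (x <= col_mx a b)%MS = [|| x == 0, x == a, x == b | x == a + b].
Proof.
apply/idP/idP.
  case/submxP => D ->; rewrite -[D]hsubmxK mul_row_col.
  rewrite [lsubmx D]mx11_scalar [rsubmx D]mx11_scalar !mul_scalar_mx.
  case: (F2_cases (lsubmx D 0 0)) => ->; case: (F2_cases (rsubmx D 0 0)) => ->;
  by rewrite ?scale0r ?scale1r ?addr0 ?add0r eqxx ?orbT.
rewrite -addsmxE; case/or4P => /eqP ->.
- exact: sub0mx.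
- exact: addsmxSl.
- exact: addsmxSr.
- exact: addmx_sub_adds.
Qed.

Lemma mx11_eq0 (R : nmodType) (A : 'M[R]_1) : (A == 0) = (A 0 0 == 0).
Proof.
apply/eqP/eqP => [-> | A00]; first by rewrite mxE.
by apply/matrixP => i j; rewrite !ord1 A00 mxE.
Qed.

Lemma unitmx_rV_eq0 (F : finFieldType) n (A : 'M[F]_n) :
  (A \in unitmx) = [forall x : 'rV_n, (x *m A == 0) ==> (x == 0)].
Proof.
rewrite -row_free_unit; apply/idP/forallP => [freeA x | injA].
  by rewrite mulmx_free_eq0 ?implybb.
by apply: inj_row_free => x /eqP xA0; apply/eqP; exact: implyP (injA x) xA0.
Qed.

Section FiniteCover.
Variables (T : finType) (s : seq T).
Hypothesis mem_s : forall x, x \in s.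

Lemma forall_cover (P : pred T) : [forall x, P x] = all P s.
Proof. by apply/forallP/allP => [P_T x _ | P_s x]; [apply: P_T | apply: P_s]. Qed.

Lemma exists_cover (P : pred T) : [exists x, P x] = has P s.
Proof. by apply/existsP/hasP => [[x Px] | [x _ Px]]; exists x. Qed.

Lemma card_cover (P : pred T) : uniq s -> #|[set x | P x]| = count P s.
Proof.
move=> s_uniq; rewrite -size_filter -(card_uniqP (filter_uniq P s_uniq)).
by apply: eq_card => x; rewrite inE mem_filter mem_s andbT.
Qed.

End FiniteCover.

Lemma has_filter_and (T : Type) (a b : pred T) s :
  has b (filter a s) = has (fun x => a x && b x) s.
Proof. by elim: s => //= x s IH; case: (a x); rewrite /= IH. Qed.

Lemma card_set_uniq (T : finType) (s : seq T) : uniq s -> #|[set:: s]| = size s.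
Proof. by move=> s_uniq; rewrite cardsE; apply/card_uniqP. Qed.

Lemma set_seq4 (T : finType) (a b c d : T) : [set a; b; c; d] = [set:: [:: a; b; c; d]].
Proof. by apply/setP => x; rewrite !inE -!orbA. Qed.

Definition bit4 := (bool * bool * bool * bool)%type.
Definition bit44 := (bit4 * bit4 * bit4 * bit4)%type.

Definition bnth (v : bit4) (i : nat) : bool :=
  let: (a, b, c, d) := v in nth false [:: a; b; c; d] i.
Definition brow (m : bit44) (i : nat) : bit4 :=
  let: (r0, r1, r2, r3) := m in nth r0 [:: r0; r1; r2; r3] i.

Definition rv (v : bit4) : 'rV['F_2]_4 := \row_(j < 4) (bnth v j)%:R.
Definition mx (m : bit44) : 'M['F_2]_4 :=
  \matrix_(i < 4, j < 4) (bnth (brow m i) j)%:R.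

Definition bits (x : 'rV['F_2]_4) : bit4 :=
  (x 0 (inord 0) != 0, x 0 (inord 1) != 0, x 0 (inord 2) != 0, x 0 (inord 3) != 0).
Definition bitsmx (A : 'M['F_2]_4) : bit44 :=
  (bits (row (inord 0) A), bits (row (inord 1) A),
   bits (row (inord 2) A), bits (row (inord 3) A)).

Lemma bnth_bits x (j : 'I_4) : bnth (bits x) j = (x 0 j != 0).
Proof. by rewrite -[in RHS](inord_val j); case: j => [[|[|[|[|j]]]] ?] //. Qed.

Lemma bitsK : cancel bits rv.
Proof. by move=> x; apply/rowP => j; rewrite mxE bnth_bits -F2_eq_natr. Qed.

Lemma rvK : cancel rv bits.
Proof. by case=> [[[a b] c] d]; rewrite /bits !mxE !inordK // !F2_natr_eq0 !negbK. Qed.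

Lemma rv_inj : injective rv.
Proof. exact: can_inj rvK. Qed.

Lemma brow_bitsmx A (i : 'I_4) : brow (bitsmx A) i = bits (row i A).
Proof. by rewrite -[in RHS](inord_val i); case: i => [[|[|[|[|i]]]] ?] //. Qed.

Lemma bitsmxK : cancel bitsmx mx.
Proof.
by move=> A; apply/matrixP => i j; rewrite mxE brow_bitsmx bnth_bits mxE -F2_eq_natr.
Qed.

Definition b0 : bit4 := (false, false, false, false).

Definition addb4 (v w : bit4) : bit4 :=
  let: (a, b, c, d) := v in let: (a', b', c', d') := w in
  (a (+) a', b (+) b', c (+) c', d (+) d').

Definition dotb4 (v w : bit4) : bool :=
  let: (a, b, c, d) := v in let: (a', b', c', d') := w in
  (a && a') (+) ((b && b') (+) ((c && c') (+) (d && d'))).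

Definition mulb4 (v : bit4) (m : bit44) : bit4 :=
  let: (a, b, c, d) := v in let: (r0, r1, r2, r3) := m in
  let sc (k : bool) r := if k then r else b0 in
  addb4 (sc a r0) (addb4 (sc b r1) (addb4 (sc c r2) (sc d r3))).

Lemma rv0 : rv b0 = 0.
Proof. by apply/rowP => j; rewrite !mxE; case: j => [[|[|[|[|j]]]] ?]. Qed.

Lemma rv_eq0 v : (rv v == 0) = (v == b0).
Proof. by rewrite -rv0 (inj_eq rv_inj). Qed.

Lemma eqmx_rv v w : (rv v == rv w)%MS = (v == w).
Proof. by rewrite eqmx_rV_F2 (inj_eq rv_inj). Qed.

Lemma rvD v w : rv v + rv w = rv (addb4 v w).
Proof.
case: v w => [[[a b] c] d] [[[a' b'] c'] d'].
by apply/rowP => j; rewrite !mxE F2_natrD; case: j => [[|[|[|[|j]]]] ?].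
Qed.

Lemma incident_rv v w : incident (rv v) (rv w) = ~~ dotb4 v w.
Proof.
case: v w => [[[a b] c] d] [[[a' b'] c'] d'].
rewrite /incident mx11_eq0 mxE !big_ord_recl big_ord0 !mxE /=.
by rewrite !F2_natrM addr0 !F2_natrD F2_natr_eq0.
Qed.

Lemma rv_mul v m : rv v *m mx m = rv (mulb4 v m).
Proof.
case: v m => [[[a b] c] d] [[[r0 r1] r2] r3].
apply/rowP => j; rewrite !mxE !big_ord_recl big_ord0 !mxE /= !F2_natrM addr0 !F2_natrD.
case: r0 r1 r2 r3 => [[[? ?] ?] ?] [[[? ?] ?] ?] [[[? ?] ?] ?] [[[? ?] ?] ?].
by case: a b c d => [] [] [] []; case: j => [[|[|[|[|]]]] ?].
Qed.

Definition tuples4 (A : Type) (s : seq A) : seq (A * A * A * A) :=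
  [seq (x, d) | x <- [seq (y, c) | y <- [seq (a, b) | a <- s, b <- s], c <- s], d <- s].

Lemma mem_tuples4 (A : eqType) (s : seq A) a b c d :
  a \in s -> b \in s -> c \in s -> d \in s -> (a, b, c, d) \in tuples4 s.
Proof. by move=> *; do 3!apply: allpairs_f => //. Qed.

Definition bit4s : seq bit4 := tuples4 [:: true; false].
Definition bit44s : seq bit44 := tuples4 bit4s.

Lemma mem_bit4s v : v \in bit4s.
Proof. by case: v => [[[a b] c] d]; apply: mem_tuples4; case: a b c d => [] [] [] []. Qed.

Lemma mem_rvs x : x \in map rv bit4s.
Proof. by rewrite -(bitsK x) map_f ?mem_bit4s. Qed.

Lemma uniq_rvs : uniq (map rv bit4s).
Proof. by rewrite (map_inj_uniq rv_inj). Qed.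

Lemma mem_mxs A : A \in map mx bit44s.
Proof.
rewrite -(bitsmxK A) map_f //.
by case: (bitsmx A) => [[[? ?] ?] ?]; apply: mem_tuples4; apply: mem_bit4s.
Qed.

Definition F2plus : seq (option 'F_2) := [:: None; Some 0; Some 1].

Lemma mem_F2plus t : t \in F2plus.
Proof. by case: t => [s|] //; case: (F2_cases s) => ->. Qed.

Lemma uniq_F2plus : uniq F2plus.
Proof. by []. Qed.

Lemma row4_rv (a b c d : 'F_2) v :
  [&& a == (bnth v 0)%:R, b == (bnth v 1)%:R, c == (bnth v 2)%:R & d == (bnth v 3)%:R] ->
  row4 a b c d = rv v.
Proof.
case/and4P => /eqP-> /eqP-> /eqP-> /eqP->.
by apply/rowP => j; rewrite !mxE; case: j => [[|[|[|[|j]]]] ?].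
Qed.

Definition Pt_bits (t : option 'F_2) : bit4 :=
  match t with
  | None => (true, false, false, false)
  | Some s => if s == 0 then (false, false, false, true) else (true, true, true, true)
  end.

Definition osc_bits (t : option 'F_2) : bit4 :=
  match t with
  | None => (false, false, false, true)
  | Some s => if s == 0 then (true, false, false, false) else (true, true, true, true)
  end.

Definition tdir_bits (t : option 'F_2) : bit4 :=
  match t with
  | None => (false, true, false, false)
  | Some s => if s == 0 then (false, false, true, false) else (true, false, true, false)
  end.

Lemma Pt_rv t : Pt t = rv (Pt_bits t).
Proof. by case: t => [s|]; [case: (F2_cases s) => ->|]; apply: row4_rv. Qed.

Lemma osc_rv t : osc t = rv (osc_bits t).
Proof. by case: t => [s|]; [case: (F2_cases s) => ->|]; apply: row4_rv. Qed.

Lemma tdir_rv t : tdir t = rv (tdir_bits t).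
Proof. by case: t => [s|]; [case: (F2_cases s) => ->|]; apply: row4_rv. Qed.

Definition onC_bits (v : bit4) : bool := has (fun t => v == Pt_bits t) F2plus.

Definition on_tangent_bits (v : bit4) (t : option 'F_2) : bool :=
  [|| v == b0, v == Pt_bits t, v == tdir_bits t | v == addb4 (Pt_bits t) (tdir_bits t)].

Definition on_some_tangent_bits (v : bit4) : bool := has (on_tangent_bits v) F2plus.

Definition nGamma_bits (v : bit4) : nat :=
  count (fun t => ~~ dotb4 v (osc_bits t)) F2plus.

Definition nC_bits (c : bit4) : nat := count (fun t => ~~ dotb4 (Pt_bits t) c) F2plus.

Definition Gplane_bits (c : bit4) : bool := has (fun t => c == osc_bits t) F2plus.

Lemma onC_rv v : onC (rv v) = onC_bits v.
Proof.
by rewrite /onC (exists_cover mem_F2plus); apply: eq_has => t; rewrite Pt_rv eqmx_rv.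
Qed.

Lemma on_tangent_rv v t : on_tangent (rv v) t = on_tangent_bits v t.
Proof.
by rewrite /on_tangent sub_col_mx_rV_F2 Pt_rv tdir_rv rvD -rv0 !(inj_eq rv_inj).
Qed.

Lemma on_some_tangent_rv v : [exists t, on_tangent (rv v) t] = on_some_tangent_bits v.
Proof. by rewrite (exists_cover mem_F2plus); apply: eq_has => t; rewrite on_tangent_rv. Qed.

Lemma nGamma_rv v : nGamma (rv v) = nGamma_bits v.
Proof.
rewrite /nGamma (card_cover mem_F2plus _ uniq_F2plus); apply: eq_count => t.
by rewrite osc_rv incident_rv.
Qed.

Lemma nC_rv c : nC (rv c) = nC_bits c.
Proof.
rewrite /nC (card_cover mem_F2plus _ uniq_F2plus); apply: eq_count => t.
by rewrite Pt_rv incident_rv.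
Qed.

Lemma Gplane_rv c : Gplane (rv c) = Gplane_bits c.
Proof.
by rewrite /Gplane (exists_cover mem_F2plus); apply: eq_has => t; rewrite osc_rv eqmx_rv.
Qed.

Definition inG_bits (m : bit44) : bool :=
  [&& all (fun v => (mulb4 v m == b0) ==> (v == b0)) bit4s,
      all (fun t => has (fun t' => mulb4 (Pt_bits t) m == Pt_bits t') F2plus) F2plus &
      all (fun t' => has (fun t => mulb4 (Pt_bits t) m == Pt_bits t') F2plus) F2plus].

Lemma inG_mx m : inG (mx m) = inG_bits m.
Proof.
rewrite /inG unitmx_rV_eq0 (forall_cover mem_rvs) all_map !(forall_cover mem_F2plus).
congr [&& _, _ & _]; [apply: eq_all => v /= | apply: eq_all => t | apply: eq_all => t'].
- by rewrite rv_mul !rv_eq0.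
- by rewrite (exists_cover mem_F2plus); apply: eq_has => t'; rewrite !Pt_rv rv_mul eqmx_rv.
- by rewrite (exists_cover mem_F2plus); apply: eq_has => t; rewrite !Pt_rv rv_mul eqmx_rv.
Qed.

Definition G2 : seq bit44 := filter inG_bits bit44s.

Definition bset (p : pred bit4) : {set 'rV['F_2]_4} := [set x | p (bits x)].

Lemma bsetP (S : {set 'rV['F_2]_4}) p : (forall v, (rv v \in S) = p v) -> S = bset p.
Proof. by move=> Sp; apply/setP => x; rewrite inE -{1}(bitsK x) Sp. Qed.

Lemma card_bset p : #|bset p| = count p bit4s.
Proof.
rewrite (card_cover mem_rvs _ uniq_rvs) count_map.
by apply: eq_count => v /=; rewrite rvK.
Qed.

Definition eqb_pred (p q : pred bit4) : bool := all (fun v => p v == q v) bit4s.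

Lemma eq_bset p q : (bset p == bset q) = eqb_pred p q.
Proof.
apply/eqP/allP => [pq v _ | pq]; last first.
  by apply/setP => x; rewrite !inE; apply/eqP/pq/mem_bit4s.
by have /setP/(_ (rv v)) := pq; rewrite !inE rvK => ->.
Qed.

Definition pt_orbit_bits (v w : bit4) : bool :=
  (w != b0) && has (fun m => mulb4 v m == w) G2.

Definition pl_orbit_bits (c c' : bit4) : bool :=
  (c' != b0) &&
  has (fun m => all (fun x => ~~ dotb4 x c == ~~ dotb4 (mulb4 x m) c') bit4s) G2.

Lemma pt_orbit_rv v : pt_orbit (rv v) = bset (pt_orbit_bits v).
Proof.
apply: bsetP => w; rewrite inE rv_eq0 /pt_orbit_bits has_filter_and.
rewrite (exists_cover mem_mxs) has_map.
by congr (_ && _); apply: eq_has => m /=; rewrite inG_mx rv_mul eqmx_rv.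
Qed.

Lemma pl_orbit_rv c : pl_orbit (rv c) = bset (pl_orbit_bits c).
Proof.
apply: bsetP => c'; rewrite inE rv_eq0 /pl_orbit_bits has_filter_and.
rewrite (exists_cover mem_mxs) has_map.
congr (_ && _); apply: eq_has => m; rewrite [LHS]/= inG_mx (forall_cover mem_rvs) all_map.
by congr (_ && _); apply: eq_all => x; rewrite [LHS]/= rv_mul !incident_rv.
Qed.

Lemma imset_bset (f : 'rV['F_2]_4 -> {set 'rV['F_2]_4}) (orb : bit4 -> pred bit4)
    (ps : seq (pred bit4)) :
  (forall v, f (rv v) = bset (orb v)) ->
  all (fun v => (v != b0) ==> has (eqb_pred (orb v)) ps) bit4s ->
  all (fun p => has (fun v => (v != b0) && eqb_pred (orb v) p) bit4s) ps ->
  [set f x | x in nzvec 'F_2] = [set:: map bset ps].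
Proof.
move=> f_orb /allP orb_ps /(all_nthP xpred0) ps_orb; apply/setP => S.
rewrite inE -has_pred1 has_map.
apply/imsetP/(has_nthP xpred0) => [[x] | [i lt_i /eqP <-]].
  rewrite -(bitsK x) inE rv_eq0 f_orb => /(implyP (orb_ps _ (mem_bit4s _))).
  by case/(has_nthP xpred0) => i lt_i orb_i ->; exists i => //=; rewrite eq_sym eq_bset.
have /hasP[v _ /andP[v_nz orb_i]] := ps_orb i lt_i.
by exists (rv v); rewrite ?inE ?rv_eq0 // f_orb; apply/eqP; rewrite eq_sym eq_bset.
Qed.

Lemma card_bsets (ps : seq (pred bit4)) :
  pairwise (fun p q => ~~ eqb_pred p q) ps -> #|[set:: map bset ps]| = size ps.
Proof.
move=> ps_pw; rewrite -(size_map bset) card_set_uniq //.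
elim: ps ps_pw => // p ps IH; rewrite pairwise_cons map_cons cons_uniq.
case/andP => p_ps /IH ->; rewrite andbT -has_pred1 has_map -all_predC.
by apply: sub_all p_ps => q /=; rewrite eq_sym eq_bset.
Qed.

Definition Tpoint_bits (v : bit4) : bool := ~~ onC_bits v && on_some_tangent_bits v.

Definition muGpoint_bits (mu : nat) (v : bit4) : bool :=
  [&& ~~ onC_bits v, ~~ on_some_tangent_bits v & nGamma_bits v == mu].

Definition onebar_bits (c : bit4) : bool := ~~ Gplane_bits c && (nC_bits c == 1).

Lemma Tpoint_rv v : Tpoint (rv v) = Tpoint_bits v.
Proof. by rewrite /Tpoint onC_rv on_some_tangent_rv. Qed.

Lemma muGpoint_rv mu v : muGpoint mu (rv v) = muGpoint_bits mu v.
Proof. by rewrite /muGpoint onC_rv on_some_tangent_rv nGamma_rv. Qed.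

Lemma onebar_plane_rv c : onebar_plane (rv c) = onebar_bits c.
Proof. by rewrite /onebar_plane Gplane_rv nC_rv. Qed.

Lemma nzvec_bset (P : pred 'rV['F_2]_4) (p : pred bit4) :
  (forall v, P (rv v) = p v) ->
  [set x in nzvec 'F_2 | P x] = bset (fun v => (v != b0) && p v).
Proof. by move=> Pp; apply: bsetP => v; rewrite !inE rv_eq0 Pp. Qed.

Lemma N1_bset : N1 'F_2 = bset (fun c => (c != b0) && (Gplane_bits c || onebar_bits c)).
Proof. by apply: nzvec_bset => c; rewrite Gplane_rv onebar_plane_rv. Qed.

Lemma N2_bset : N2 'F_2 = bset (fun c => (c != b0) && (nC_bits c == 2)).
Proof. by apply: nzvec_bset => c; rewrite /dC_plane nC_rv. Qed.

Lemma N3_bset : N3 'F_2 = bset (fun c => (c != b0) && (nC_bits c == 3)).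
Proof. by apply: nzvec_bset => c; rewrite /dC_plane nC_rv. Qed.

Lemma N4_bset : N4 'F_2 = bset (fun c => (c != b0) && (nC_bits c == 0)).
Proof. by apply: nzvec_bset => c; rewrite /dC_plane nC_rv. Qed.

Lemma M1_bset : M1 'F_2 = bset (fun x => (x != b0) && onC_bits x).
Proof. exact: nzvec_bset onC_rv. Qed.

Lemma M2_bset : M2 'F_2 = bset (fun x => (x != b0) && (Tpoint_bits x || muGpoint_bits 0 x)).
Proof. by apply: nzvec_bset => x; rewrite Tpoint_rv muGpoint_rv. Qed.

Lemma M3_bset : M3 'F_2 = bset (fun x => (x != b0) && muGpoint_bits 3 x).
Proof. exact: nzvec_bset (muGpoint_rv 3). Qed.

Lemma M4_bset : M4 'F_2 = bset (fun x => (x != b0) && muGpoint_bits 1 x).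
Proof. exact: nzvec_bset (muGpoint_rv 1). Qed.

Lemma plane_orbits :
  [set pl_orbit c | c in nzvec 'F_2] = [set N1 'F_2; N2 'F_2; N3 'F_2; N4 'F_2].
Proof.
rewrite N1_bset N2_bset N3_bset N4_bset set_seq4.
by apply: (imset_bset (ps := [:: _; _; _; _])) pl_orbit_rv _ _; vm_compute.
Qed.

Lemma point_orbits :
  [set pt_orbit x | x in nzvec 'F_2] = [set M1 'F_2; M2 'F_2; M3 'F_2; M4 'F_2].
Proof.
rewrite M1_bset M2_bset M3_bset M4_bset set_seq4.
by apply: (imset_bset (ps := [:: _; _; _; _])) pt_orbit_rv _ _; vm_compute.
Qed.

Lemma card_plane_orbits : #|[set pl_orbit c | c in nzvec 'F_2]| = 4.
Proof.
rewrite plane_orbits N1_bset N2_bset N3_bset N4_bset set_seq4.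
by rewrite (card_bsets (ps := [:: _; _; _; _])) //; vm_compute.
Qed.

Lemma card_point_orbits : #|[set pt_orbit x | x in nzvec 'F_2]| = 4.
Proof.
rewrite point_orbits M1_bset M2_bset M3_bset M4_bset set_seq4.
by rewrite (card_bsets (ps := [:: _; _; _; _])) //; vm_compute.
Qed.

Theorem theorem4p2 :
  (* plane orbits *)
  [set pl_orbit c | c in nzvec 'F_2] =
    [set N1 'F_2; N2 'F_2; N3 'F_2; N4 'F_2] /\
  #|[set pl_orbit c | c in nzvec 'F_2]| = 4%N /\
  #|[set c in nzvec 'F_2 | Gplane c]| = 3%N /\
  #|[set c in nzvec 'F_2 | onebar_plane c]| = 3%N /\
  #|N1 'F_2| = 6%N /\ #|N2 'F_2| = 6%N /\ #|N3 'F_2| = 1%N /\ #|N4 'F_2| = 2%N /\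
  (* point orbits *)
  [set pt_orbit x | x in nzvec 'F_2] =
    [set M1 'F_2; M2 'F_2; M3 'F_2; M4 'F_2] /\
  #|[set pt_orbit x | x in nzvec 'F_2]| = 4%N /\
  #|[set x in nzvec 'F_2 | Tpoint x]| = 6%N /\
  #|[set x in nzvec 'F_2 | muGpoint 0 x]| = 2%N /\
  #|M1 'F_2| = 3%N /\ #|M2 'F_2| = 8%N /\ #|M3 'F_2| = 1%N /\ #|M4 'F_2| = 3%N.
Proof.
rewrite card_plane_orbits card_point_orbits plane_orbits point_orbits.
rewrite (nzvec_bset Gplane_rv) (nzvec_bset onebar_plane_rv) (nzvec_bset Tpoint_rv).
rewrite (nzvec_bset (muGpoint_rv 0)) N1_bset N2_bset N3_bset N4_bset.
rewrite M1_bset M2_bset M3_bset M4_bset !card_bset.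
by do !split.
Qed.
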